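(* Let $(q_i)_i$ be probabilities with $\sum_iq_i=1$ and $\mu_i>0$, and let $$f(\alpha)=\inf_{\{\alpha_i\}:\ \alpha_i\in[0,1],\ \sum_iq_i\alpha_i=\alpha}\ \sum_iq_iG_{\mu_i}(\alpha_i).$$ For $\alpha\in(0,1)$, let $\Lambda(\alpha)\in\mathbb{R}$ be defined implicitly by $$1-\alpha=\sum_iq_i\,\Phi\!\left(\frac{\Lambda(\alpha)}{\mu_i}+\frac{\mu_i}{2}\right).$$ Then $$f(\alpha)=\sum_iq_i\,\Phi\!\left(\frac{\Lambda(\alpha)}{\mu_i}-\frac{\mu_i}{2}\right).$$
   Context: $\Phi$ is the standard normal CDF and $G_\mu(\alpha)=\Phi(\Phi^{-1}(1-\alpha)-\mu)$ for $\alpha\in[0,1]$ (the Gaussian trade-off function). *)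

From HB Require Import structures.
From mathcomp Require Import all_boot all_order all_algebra.
From mathcomp Require Import all_classical all_reals all_analysis.
Set Implicit Arguments. Unset Strict Implicit. Unset Printing Implicit Defensive.
Import Order.TTheory GRing.Theory Num.Theory.
Local Open Scope classical_set_scope.
Local Open Scope ring_scope.

Definition Phi {R : realType} (x : R) : R :=
  fine (normal_prob 0 1 `]-oo, x]).

(* Quantile function of the standard normal, for p in (0,1):
   Phi is a continuous increasing bijection R -> (0,1), so this sup is the
   unique x with Phi x = p. *)
Definition PhiInv {R : realType} (p : R) : R := sup [set x : R | Phi x <= p].

(* Gaussian trade-off function G_mu(alpha) = Phi(Phi^{-1}(1-alpha) - mu),
   on [0,1], with the limiting conventions Phi^{-1}(1) = +oo, Phi^{-1}(0) = -oo,
   i.e. G_mu(0) = 1 and G_mu(1) = 0. *)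
Definition G {R : realType} (mu alpha : R) : R :=
  if alpha <= 0 then 1
  else if 1 <= alpha then 0
  else Phi (PhiInv (1 - alpha) - mu).

Definition f_mix {R : realType} (n : nat) (q mu : 'I_n -> R) (alpha : R) : R :=
  inf [set s : R | exists a : 'I_n -> R,
        (forall i, 0 <= a i <= 1) /\
        \sum_(i < n) q i * a i = alpha /\
        s = \sum_(i < n) q i * G (mu i) (a i)].

From HB Require Import structures.
From mathcomp Require Import all_boot all_order all_algebra.
From mathcomp Require Import all_classical all_reals all_analysis.
From mathcomp Require Import ring lra.
Import Order.TTheory GRing.Theory Num.Theory.
Import numFieldTopology.Exports.
Local Open Scope classical_set_scope.
Local Open Scope ring_scope.

(* Lagrangian duality. With c = exp Lam and a_i = 1 - Phi (Lam / mu_i + mu_i / 2)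
   we have G_{mu_i}(a_i) = Phi (Lam / mu_i - mu_i / 2) and sum_i q_i a_i = alpha,
   so it suffices that each a_i minimises a |-> G_{mu_i}(a) + c a on [0, 1]:
   weighting by q_i then bounds every admissible sum_i q_i G_{mu_i}(alpha_i).
   Writing a = 1 - Phi z turns this into minimising Phi (z - mu) - c Phi z, whose
   derivative phi(z) (exp (mu z - mu^2 / 2) - c) changes sign exactly at
   z = Lam / mu + mu / 2; the endpoints a = 0, 1 are the limits z -> +oo, -oo. *)

Section derivative_sign.
Context {R : realType} {f df : R -> R}.
Hypothesis f_df : forall t : R, is_derive t 1 f (df t).

Let f_derivable (t : R) : derivable f t 1. Proof. by case: (f_df t). Qed.

Let derive1_f (t : R) : (f^`())%classic t = df t.
Proof. by rewrite derive1E derive_val. Qed.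

Let f_continuous (i : interval R) : {within [set` i], continuous f}.
Proof. by apply: derivable_within_continuous => t _; exact: f_derivable. Qed.

Lemma gtr0_is_derive_incr : (forall t, 0 < df t) -> {homo f : x y / x < y}.
Proof.
move=> df_gt0 x y xy.
apply: (@gtr0_derive1_lt_cc _ f x y) => //; rewrite ?in_itv /= ?lexx ?ltW //.
by move=> t _; rewrite derive1_f.
Qed.

Lemma is_derive_sign_change_min (z0 : R) :
  (forall t, t < z0 -> df t <= 0) -> (forall t, z0 < t -> 0 <= df t) ->
  forall z, f z0 <= f z.
Proof.
move=> df_le0 df_ge0 z; have [z0z|zz0] := leP z0 z.
- apply: (@ger0_derive1_ndecry _ f z0) => // t; rewrite in_itv /= andbT => z0t.
  by rewrite derive1_f df_ge0.
- apply: (@ler0_derive1_nincrNy _ f z0) => //; last exact: ltW.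
  by move=> t; rewrite in_itv /= => tz0; rewrite derive1_f df_le0.
Qed.

End derivative_sign.

Lemma lagrangian_sum_le {R : numDomainType} {n : nat} (q : 'I_n -> R)
    (g : 'I_n -> R -> R) (c : R) (a b : 'I_n -> R) :
  (forall i, 0 <= q i) ->
  (forall i, g i (b i) + c * b i <= g i (a i) + c * a i) ->
  \sum_(i < n) q i * a i = \sum_(i < n) q i * b i ->
  \sum_(i < n) q i * g i (b i) <= \sum_(i < n) q i * g i (a i).
Proof.
move=> q_ge0 gb_le sum_ab.
have split_sum x : \sum_(i < n) q i * (g i (x i) + c * x i) =
    \sum_(i < n) q i * g i (x i) + c * \sum_(i < n) q i * x i.
  by rewrite mulr_sumr -big_split; apply: eq_bigr => i _ /=; ring.
rewrite -(lerD2r (c * \sum_(i < n) q i * a i)) -split_sum sum_ab -split_sum.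
by apply: ler_sum => i _; rewrite ler_wpM2l.
Qed.

Lemma mem_lbound_inf {R : realType} (S : set R) (x : R) :
  S x -> lbound S x -> inf S = x.
Proof.
move=> Sx Sx_lb; apply/le_anti/andP; split.
- by apply: ge_inf Sx; exists x.
- by apply: lb_le_inf; first exists x.
Qed.

(* Viewing [Phi] as the cdf of this random variable gives access to the
   library's cdf lemmas. *)
Definition std_normal_id {R : realType} : measurableTypeR R -> R := idfun.

HB.instance Definition _ {R : realType} :=
  isMeasurableFun.Build _ _ _ _ (@std_normal_id R) (@measurable_id _ _ setT).

Section standard_normal.
Context {R : realType}.
Local Notation pdf := (@normal_pdf R 0 1).
Local Notation X := (std_normal_id : {RV (@normal_prob R 0 1) >-> R}).

Lemma std_normal_pdfE (x : R) : pdf x = normal_peak 1 * expR (- x ^+ 2 / 2).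
Proof. by rewrite /normal_pdf oner_eq0 /= /normal_fun subr0 expr1n. Qed.

Lemma std_normal_pdf_gt0 (x : R) : 0 < pdf x.
Proof. by rewrite std_normal_pdfE mulr_gt0 ?expR_gt0 ?normal_peak_gt0. Qed.

Lemma std_normal_pdf_shift (m x : R) :
  pdf (x - m) = pdf x * expR (m * x - m ^+ 2 / 2).
Proof. by rewrite !std_normal_pdfE -mulrA -expRD; congr (_ * expR _); field. Qed.

Lemma is_derive_Phi (x : R) : is_derive x 1 (@Phi R) (pdf x).
Proof.
have [|||Phi_derivable <-] :=
  @continuous_FTC1 R pdf (BInfty _ true) x (x + 1) (ltr_pwDr ltr01 (lexx x)).
- exact: integrableS (integrable_normal_pdf 0 1).
- exact: ltNyr.
- by apply: continuous_normal_pdf; exact: oner_neq0.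
by rewrite derive1E; exact: derivableP Phi_derivable.
Qed.

Lemma continuous_Phi : continuous (@Phi R).
Proof.
move=> x; apply: differentiable_continuous; apply/derivable1_diffP.
by case: (is_derive_Phi x).
Qed.

Lemma cdf_std_normal (x : R) : cdf X x = (Phi x)%:E.
Proof. by rewrite /cdf /Phi /distribution /= fineK // fin_num_measure. Qed.

Lemma Phi_ge0 (x : R) : 0 <= Phi x.
Proof. by rewrite -lee_fin -cdf_std_normal cdf_ge0. Qed.

Lemma Phi_le1 (x : R) : Phi x <= 1.
Proof. by rewrite -lee_fin -cdf_std_normal cdf_le1. Qed.

Lemma Phi_cvgy : Phi x @[x --> +oo] --> (1 : R).
Proof. exact: fine_cvg (cvg_cdfy1 X). Qed.

Lemma Phi_cvgNy : Phi x @[x --> -oo] --> (0 : R).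
Proof. exact: fine_cvg (cvg_cdfNy0 X). Qed.

Lemma ler_Phi : {mono @Phi R : x y / x <= y}.
Proof. exact/le_mono/(gtr0_is_derive_incr is_derive_Phi std_normal_pdf_gt0). Qed.

Lemma ltr_Phi : {mono @Phi R : x y / x < y}.
Proof. exact: leW_mono ler_Phi. Qed.

Lemma Phi_gt0 (x : R) : 0 < Phi x.
Proof. by rewrite (le_lt_trans (Phi_ge0 (x - 1))) // ltr_Phi gtrBl. Qed.

Lemma Phi_lt1 (x : R) : Phi x < 1.
Proof. by rewrite (lt_le_trans _ (Phi_le1 (x + 1))) // ltr_Phi ltrDl. Qed.

Lemma PhiK : cancel (@Phi R) PhiInv.
Proof.
move=> z; rewrite /PhiInv.
have -> : [set x | Phi x <= Phi z] = [set x | x <= z].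
  by apply/seteqP; split => x /=; rewrite ler_Phi.
apply/le_anti/andP; split.
- by apply: ge_sup; [exists z => /= | move=> x].
- by apply: ub_le_sup; [exists z => x | rewrite /=].
Qed.

Lemma Phi_PhiInv_ge (p : R) : p < 1 -> p <= Phi (PhiInv p).
Proof.
move=> p_lt1; set S := [set x | Phi x <= p].
have [N pN] : exists N, p < Phi N.
  have [M [_ PhiM]] := cvgr_gt _ Phi_cvgy _ p_lt1.
  by exists (M + 1); apply: PhiM; rewrite ltrDl.
have S_ub : ubound S N.
  by move=> x Sx; rewrite -ler_Phi ltW // (le_lt_trans Sx).
have gt_PhiInv x : PhiInv p < x -> p < Phi x.
  move=> px; rewrite ltNge; apply/negP => Sx.
  by move: (ub_le_sup (ex_intro _ N S_ub) Sx); rewrite leNgt px.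
apply: (cvgr_to_ge (cvg_at_right_filter (continuous_Phi (PhiInv p)))).
by near=> x; apply/ltW/gt_PhiInv; near: x; exact: nbhs_right_gt.
Unshelve. all: end_near.
Qed.

Lemma G_1BPhi (m z : R) : G m (1 - Phi z) = Phi (z - m).
Proof.
rewrite /G ifF; last by rewrite leNgt subr_gt0 Phi_lt1.
rewrite ifF; last by rewrite leNgt gtrBl Phi_gt0.
by rewrite subKr PhiK.
Qed.

End standard_normal.

Section lagrangian.
Context {R : realType} (m Lam : R).
Hypothesis m_gt0 : 0 < m.
Local Notation zs := (Lam / m + m / 2).
Let H (z : R) := Phi (z - m) - expR Lam * Phi z.

Let is_derive_H (t : R) :
  is_derive t 1 H (normal_pdf 0 1 t * (expR (m * t - m ^+ 2 / 2) - expR Lam)).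
Proof.
have dPhi_m : is_derive t 1 (fun z => Phi (z - m)) (normal_pdf 0 1 (t - m) * 1).
  exact: (is_derive1_comp (g := center m) (is_derive_Phi (t - m))
            (is_derive_shift t 1 (- m))).
have -> : H = (fun z => Phi (z - m)) - expR Lam \*: @Phi R by [].
apply: is_derive_eq (is_deriveB dPhi_m (is_deriveZ (expR Lam) (is_derive_Phi t))) _.
by rewrite mulr1 std_normal_pdf_shift /GRing.scale /=; ring.
Qed.

Let H_min (z : R) : H zs <= H z.
Proof.
have m_zs : m * zs = Lam + m ^+ 2 / 2 by field; rewrite gt_eqF.
apply: (is_derive_sign_change_min is_derive_H) => t t_zs.
- rewrite pmulr_rle0 ?std_normal_pdf_gt0 // subr_le0 ler_expR lerBlDr.
  by rewrite -m_zs ler_pM2l // ltW.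
- rewrite pmulr_rge0 ?std_normal_pdf_gt0 // subr_ge0 ler_expR lerBrDr.
  by rewrite -m_zs ler_pM2l // ltW.
Qed.

Let H_le1B : H zs <= 1 - expR Lam.
Proof.
have : 1 - expR Lam * Phi z @[z --> +oo] --> 1 - expR Lam * 1.
  exact: (cvgB (cvg_cst _) (cvgM (f := cst (expR Lam)) (cvg_cst _) Phi_cvgy)).
rewrite mulr1 => /cvgr_to_ge; apply; apply: nearW => z.
by apply: le_trans (H_min z) _; rewrite lerD2r Phi_le1.
Qed.

Let H_le0 : H zs <= 0.
Proof.
have : (1 - expR Lam) * Phi z @[z --> -oo] --> (1 - expR Lam) * 0.
  exact: (cvgM (f := cst (1 - expR Lam)) (cvg_cst _) Phi_cvgNy).
rewrite mulr0 => /cvgr_to_ge; apply; apply: nearW => z.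
by apply: le_trans (H_min z) _; rewrite mulrBl mul1r lerD2r ler_Phi gerBl ltW.
Qed.

Lemma G_lagrangian_min (a : R) : 0 <= a <= 1 ->
  G m (1 - Phi zs) + expR Lam * (1 - Phi zs) <= G m a + expR Lam * a.
Proof.
move=> /andP[a_ge0 a_le1].
have -> : G m (1 - Phi zs) + expR Lam * (1 - Phi zs) = H zs + expR Lam.
  by rewrite G_1BPhi /H; ring.
rewrite /G; have [a_le0|a_gt0] := leP a 0.
  have -> : a = 0 by apply/le_anti; rewrite a_le0 a_ge0.
  by move: H_le1B; lra.
have [a_ge1|a_lt1] := leP 1 a.
  have -> : a = 1 by apply/le_anti; rewrite a_le1 a_ge1.
  by move: H_le0; lra.
have Phi_ge : 1 - a <= Phi (PhiInv (1 - a)) by apply: Phi_PhiInv_ge; lra.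
have := ler_wpM2l (expR_ge0 Lam) Phi_ge.
move: (H_min (PhiInv (1 - a))); rewrite /H; lra.
Qed.

End lagrangian.

Theorem lemma5 (R : realType) (n : nat) (q mu : 'I_n -> R)
  (hq : forall i, 0 <= q i) (hq1 : \sum_(i < n) q i = 1)
  (hmu : forall i, 0 < mu i)
  (alpha : R) (halpha : 0 < alpha < 1) (Lam : R)
  (hLam : 1 - alpha = \sum_(i < n) q i * Phi (Lam / mu i + mu i / 2)) :
  f_mix q mu alpha = \sum_(i < n) q i * Phi (Lam / mu i - mu i / 2).
Proof.
pose astar i := 1 - Phi (Lam / mu i + mu i / 2).
have astar01 i : 0 <= astar i <= 1.
  by rewrite subr_ge0 Phi_le1 gerBl Phi_ge0.
have sum_astar : \sum_(i < n) q i * astar i = alpha.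
  rewrite /astar; under eq_bigr do rewrite mulrBr mulr1.
  by rewrite sumrB hq1 -hLam subKr.
have G_astar i : G (mu i) (astar i) = Phi (Lam / mu i - mu i / 2).
  by rewrite G_1BPhi; congr Phi; field; rewrite gt_eqF ?hmu.
under eq_bigr do rewrite -G_astar.
apply: mem_lbound_inf; first by exists astar.
move=> _ [a [a01 [sum_a ->]]].
apply: (lagrangian_sum_le q (fun i => G (mu i)) (expR Lam)) => // [i|].
- exact: G_lagrangian_min.
- by rewrite sum_a sum_astar.
Qed.
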